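(* Let $(I,\preceq)$ be a finite poset with $|I|=n$. For each $i\in I$ let $G_i$ be a finite group with a symmetric generating set $S_i$, $1_{G_i}\notin S_i$, and let $\mathcal{G}_i=Cay(G_i,S_i)$. For $i\in I$ put $A(i)=\{j\in I: j\succ i\}$ and $F_i=\{\phi:\prod_{j\in A(i)}G_j\to G_i\}$ (if $A(i)=\emptyset$, $F_i$ is identified with $G_i$), and let $G=\prod_{i\in I}F_i$ be the generalized wreath product of the groups $G_i$ (defined in the context). For $i\in I$ and $s_i\in S_i$ let $\overline{f_{i,s_i}}\in G$ be the element whose $i$-th coordinate is the function $\overline{s_i}:\prod_{j\in A(i)}G_j\to G_i$ taking the value $s_i$ at $(1_{G_j})_{j\in A(i)}$ and the value $1_{G_i}$ elsewhere, and whose $q$-th coordinate, for every $q\neq i$, is the constant function with value $1_{G_q}$. Let $S=\{\overline{f_{i,s_i}}: i\in I,\ s_i\in S_i\}$. Then $S$ generates $G$, and the generalized wreath product graph $\mathcal{G}$ of the graphs $\{\mathcal{G}_i\}_{i\in I}$ (defined in the context) is the Cayley graph $Cay(G,S)$: its vertex set is the underlying set of $G$, and two vertices $f,h$ are adjacent in $\mathcal{G}$ if and only if $h=f\sigma$ for some $\sigma\in S$.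
   Context: Cayley graph: for a group $H$ with finite symmetric generating set $T$, $1_H\notin T$, $Cay(H,T)$ has vertex set $H$ and $g\sim g'$ iff $gt=g'$ for some $t\in T$. Generalized wreath product of groups: let $X=\prod_{i\in I}G_i$; for $J\subseteq I$ write $x_J=(x_j)_{j\in J}$. An element $f=(f_i)_{i\in I}\in G=\prod_i F_i$ acts on the right on $X$ by $xf=y$ with $y_i=x_i\cdot f_i(x_{A(i)})$ for each $i$ (product in $G_i$). This action is faithful, and $G$ is the permutation group so obtained, with product $fh$ meaning ''first $f$, then $h$'', i.e. $x(fh)=(xf)h$; explicitly $(fh)_i(z)=f_i(z)\cdot h_i\big((z_j f_j(z_{A(j)}))_{j\in A(i)}\big)$ for $z\in\prod_{j\in A(i)}G_j$ (note $A(j)\subseteq A(i)$ for $j\in A(i)$). Generalized wreath product of the graphs $\mathcal{G}_i=Cay(G_i,S_i)$: the graph $\mathcal{G}$ has vertex set $\{(f_1,\ldots,f_n): f_i\in F_i\}$. For such a vertex $f$, define elements $e_j(f)\in G_j$ recursively (by induction along $\preceq$, starting from indices $j$ with $A(j)=\emptyset$) by $e_j(f)=f_j\big((e_k(f)^{-1})_{k\in A(j)}\big)$. Vertices $f$ and $h$ are adjacent iff there exists $i\in I$ such that (1) $f_j=h_j$ for every $j\neq i$; and (2) letting $p_i(f)=(e_k(f)^{-1})_{k\in A(i)}$, $f_i(z)=h_i(z)$ for all $z\neq p_i(f)$, and $f_i(p_i(f))$ and $h_i(p_i(f))$ are adjacent in $\mathcal{G}_i$. *)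

From HB Require Import structures.
From mathcomp Require Import all_boot all_order all_fingroup.
Set Implicit Arguments.
Unset Strict Implicit.
Unset Printing Implicit Defensive.
Import Order.TTheory.
Local Open Scope group_scope.

Section GWP.
Context {disp : Order.disp_t} {I : finPOrderType disp} (gT : I -> finGroupType).

Definition A (i : I) : pred I := fun j => (i < j)%O.

Definition prodOn (P : pred I) := {dffun forall j : {j : I | P j}, gT (sval j)}.

Definition restr (P : pred I) (x : forall i, gT i) : prodOn P :=
  finfun (fun j : {j : I | P j} => x (sval j)).

Definition Fi (i : I) := {ffun prodOn (A i) -> gT i}.

Definition F := {dffun forall i : I, Fi i}.

Definition sub_restr (i j : I) (Hij : A i j) (z : prodOn (A i)) : prodOn (A j) :=
  finfun (fun k : {k : I | A j k} =>
            z (exist (fun k => A i k) (sval k) (lt_trans Hij (svalP k)))).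

Definition wact (f : F) (x : forall i, gT i) : forall i, gT i :=
  fun i => x i * f i (restr (A i) x).

(* the product fh ("first f, then h"), as in the context:
   (fh)_i(z) = f_i(z) * h_i((z_j f_j(z_{A(j)}))_{j in A(i)}) *)
Definition wmul (f h : F) : F :=
  finfun (fun i : I => finfun (fun z : prodOn (A i) =>
    f i z * h i (finfun (fun j : {j : I | A i j} =>
                   z j * f (sval j) (sub_restr (svalP j) z))))).

Definition wone : F := finfun (fun i : I => finfun (fun _ : prodOn (A i) => (1 : gT i))).

Definition is_subgroup (H : F -> Prop) : Prop :=
  [/\ H wone,
      (forall f h, H f -> H h -> H (wmul f h)) &
      (forall f g, H f -> wmul f g = wone -> H g)].

Definition generates (Sg : F -> Prop) : Prop :=
  forall H, is_subgroup H -> (forall s, Sg s -> H s) -> forall f, H f.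

Definition sbar (i : I) (s : gT i) : Fi i :=
  [ffun z => if z == restr (A i) (fun k => 1) then s else 1].

Definition fbar (i : I) (s : gT i) : F :=
  finfun (dfwith (fun q : I => wone q) (sbar s)).

Definition inS (S : forall i, {set gT i}) (sigma : F) : Prop :=
  exists i, exists2 s, s \in S i & sigma = fbar s.

Definition cay_adj (H : finGroupType) (T : {set H}) (g g' : H) : Prop :=
  exists2 t, t \in T & g * t = g'.

Definition cayF_adj (Sg : F -> Prop) (f h : F) : Prop :=
  exists2 sigma, Sg sigma & h = wmul f sigma.

(* e_j(f) = f_j((e_k(f)^-1)_{k in A(j)}), defined by induction along the
   order starting from the j with A(j) empty.  Since every chain in I has
   fewer than #|I| elements, #|I| iterations of the defining equation from
   any starting point yield the recursively defined family. *)
Definition estep (f : F) (E : forall i, gT i) : forall j, gT j :=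
  fun j => f j (restr (A j) (fun k => (E k)^-1)).

Definition e (f : F) : forall j, gT j := iter #|I| (estep f) (fun k => 1).

Definition p (i : I) (f : F) : prodOn (A i) := restr (A i) (fun k => (e f k)^-1).

Definition wg_adj (S : forall i, {set gT i}) (f h : F) : Prop :=
  exists i : I,
    [/\ (forall j, j != i -> f j = h j),
        (forall z, z != p i f -> f i z = h i z) &
        cay_adj (S i) (f i (p i f)) (h i (p i f))].

End GWP.

(* The product in G is "first f, then h", so right multiplication of f by a
   generator fbar s of level i changes f in exactly one value: the value of
   f_i at the point p_i(f), which gets multiplied by s on the right; this is
   precisely an edge of the generalized wreath product graph.  For
   generation, argue by induction along the poset: if all coordinates above
   i can be changed freely, first change them so that p_i becomes any
   prescribed point z, then adjust the value of f_i at z by a word in S_i,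
   and finally restore the coordinates above i. *)
From HB Require Import structures.
From mathcomp Require Import all_boot all_order all_fingroup.
Set Implicit Arguments.
Unset Strict Implicit.
Unset Printing Implicit Defensive.
Import Order.TTheory.
Local Open Scope group_scope.

Section UpperSets.
Context {disp : Order.disp_t} {I : finPOrderType disp}.

Lemma A_irr (i : I) : ~~ A i i.
Proof. by rewrite /A ltxx. Qed.

Lemma card_A_lt (j k : I) : A j k -> #|A k| < #|A j|.
Proof.
move=> Ajk; apply/proper_card/properP; split; last by exists k; rewrite !unfold_in /A ?ltxx.
by apply/subsetP => x; rewrite !unfold_in /A => /(lt_trans Ajk).
Qed.

Lemma card_A_ltT (j : I) : #|A j| < #|I|.
Proof. by apply/proper_card/properP; split; [apply/subsetP | exists j; rewrite ?unfold_in /A ?ltxx]. Qed.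

Lemma A_ind (P : I -> Prop) :
  (forall i, (forall j, A i j -> P j) -> P i) -> forall i, P i.
Proof.
move=> IH i; have [n lt_i] := ubnP #|A i|; elim: n => // n IHn in i lt_i *.
by apply: IH => j Aij; apply: IHn; apply: leq_trans (card_A_lt Aij) _; rewrite -ltnS.
Qed.

End UpperSets.

Section WreathProduct.
Context {disp : Order.disp_t} {I : finPOrderType disp} (gT : I -> finGroupType).

Local Notation F := (F gT).
Local Notation A := (@A disp I).
Local Notation one i := (restr (A i) (fun k => (1 : gT k))).

Lemma restr_surj (P : pred I) (z : prodOn gT P) : exists x, restr P x = z.
Proof.
exists (fun k => if decP (@idP (P k)) is left Pk return gT k then z (exist P k Pk) else 1).
apply/ffunP => j; rewrite ffunE; case: decP => [Pj | /(_ (svalP j))//].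
by case: j Pj => k Pk Pk'; rewrite (bool_irrelevance Pk' Pk).
Qed.

Lemma iter_estep_stable (f : F) j n m :
  #|A j| < n -> #|A j| < m ->
  iter n (estep f) (fun k => 1) j = iter m (estep f) (fun k => 1) j.
Proof.
elim/(@A_ind _ I): j n m => j IH [|n] [|m] //= lt_n lt_m.
congr (f j _); apply/ffunP => k; rewrite !ffunE; congr _^-1.
by have lt_k := card_A_lt (svalP k); apply: IH (svalP k) _ _ _ _; apply: leq_trans lt_k _.
Qed.

Lemma eE (f : F) j : e f j = f j (p j f).
Proof.
rewrite {1}/e (@iter_estep_stable f j _ #|I|.+1) ?card_A_ltT //.
by rewrite ltnW // ltnS card_A_ltT.
Qed.

Lemma sub_restr_p (f : F) i (j : {j | A i j}) :
  sub_restr (svalP j) (p i f) = p (sval j) f.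
Proof. by apply/ffunP => k; rewrite !ffunE. Qed.

Lemma p_local (f g : F) i : (forall j, A i j -> f j = g j) -> p i f = p i g.
Proof.
move=> fg; suff e_fg j : A i j -> e f j = e g j.
  by apply/ffunP => j; rewrite !ffunE e_fg // (svalP j).
elim/(@A_ind _ I): j => j IH Aij; rewrite !eE fg //; congr (g j _).
apply/ffunP => k; have Ajk : A j (sval k) := svalP k.
by rewrite !ffunE IH //; apply: lt_trans Aij Ajk.
Qed.

(* The argument of h_i in the product [wmul f h]. *)
Definition wact_on (f : F) i (z : prodOn gT (A i)) : prodOn gT (A i) :=
  finfun (fun j : {j | A i j} => z j * f (sval j) (sub_restr (svalP j) z)).

Lemma wact_on_p (f : F) i : wact_on f (p i f) = one i.
Proof. by apply/ffunP => j; rewrite !ffunE sub_restr_p eE mulVg. Qed.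

Lemma wact_on_eq1 (f : F) i z : wact_on f z = one i -> z = p i f.
Proof.
move=> /ffunP z1; suff z_e j (Aij : A i j) : z (exist _ j Aij) = (e f j)^-1.
  by apply/ffunP => -[j Aij]; rewrite z_e /p /restr ffunE.
elim/(@A_ind _ I): j Aij => j IH Aij.
have := z1 (exist _ j Aij); rewrite !ffunE /= => /(canRL (mulgK _)).
rewrite mul1g eE => ->; congr (f j _)^-1.
apply/ffunP => k; have Ajk : A j (sval k) := svalP k.
by rewrite !ffunE IH.
Qed.

Lemma wact_on_eq1E (f : F) i z : (wact_on f z == one i) = (z == p i f).
Proof. by apply/eqP/eqP => [/wact_on_eq1 | ->]; last exact: wact_on_p. Qed.

Definition upd_coord (f : F) i (v : Fi gT i) : F := finfun (dfwith (fun q => f q) v).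

Lemma upd_coord_in (f : F) i (v : Fi gT i) : upd_coord f v i = v.
Proof. by rewrite ffunE dfwith_in. Qed.

Lemma upd_coord_out (f : F) i (v : Fi gT i) j : j != i -> upd_coord f v j = f j.
Proof. by rewrite eq_sym => ij; rewrite ffunE dfwith_out. Qed.

Definition upd_point (f : F) i (z : prodOn gT (A i)) (v : gT i) : F :=
  upd_coord f [ffun w => if w == z then v else f i w].
Arguments upd_point f i z v : clear implicits.

Lemma upd_point_in (f : F) i z v w :
  upd_point f i z v i w = if w == z then v else f i w.
Proof. by rewrite upd_coord_in ffunE. Qed.

Lemma upd_point_out (f : F) i z v j : j != i -> upd_point f i z v j = f j.
Proof. exact: upd_coord_out. Qed.

Lemma upd_pointP (f h : F) i z v :
  h = upd_point f i z v <->
  [/\ forall j, j != i -> f j = h j, forall w, w != z -> f i w = h i w & h i z = v].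
Proof.
split=> [-> | [off_i off_z hz]].
  by split=> [j /upd_point_out | w /negbTE wz | ]; rewrite ?upd_point_in ?wz ?eqxx.
apply/ffunP => j; have [-> | ji] := eqVneq j i; last by rewrite upd_point_out ?off_i.
by apply/ffunP => w; rewrite upd_point_in; case: eqVneq => [-> | /off_z].
Qed.

Lemma upd_point_coord_eq (f g : F) i z v j :
  f j = g j -> upd_point f i z v j = upd_point g i z v j.
Proof.
case: (eqVneq j i) => [-> | ji] fg; last by rewrite !upd_point_out.
by apply/ffunP => w; rewrite !upd_point_in fg.
Qed.

Lemma upd_point_id (f : F) i z : upd_point f i z (f i z) = f.
Proof. by symmetry; apply/upd_pointP; split=> // w; rewrite upd_point_in. Qed.

Lemma upd_pointK (f : F) i z v w : upd_point (upd_point f i z v) i z w = upd_point f i z w.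
Proof.
apply/upd_pointP; split=> [j ji | y yz |]; rewrite ?upd_point_in ?eqxx //.
  by rewrite !upd_point_out.
by rewrite (negbTE yz).
Qed.

Lemma p_upd_point (f : F) i z v : p i (upd_point f i z v) = p i f.
Proof.
apply: p_local => j Aij; apply: upd_point_out.
by apply: contraTneq Aij => ->; apply: A_irr.
Qed.

Lemma wmul_fbar (f : F) i (s : gT i) :
  wmul f (fbar s) = upd_point f i (p i f) (f i (p i f) * s).
Proof.
apply/ffunP => q; rewrite ffunE; have [-> {q} | qi] := eqVneq q i.
  apply/ffunP => z; rewrite upd_point_in !ffunE dfwith_in ffunE.
  by rewrite [_ == _]wact_on_eq1E; case: eqP => [-> | _]; rewrite ?mulg1.
rewrite upd_point_out //; apply/ffunP => z.
by rewrite !ffunE dfwith_out 1?eq_sym // /wone ffunE ffunE mulg1.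
Qed.

Definition retarget (f : F) i (x : forall k, gT k) : F :=
  finfun (fun k => (if A i k then [ffun=> (x k)^-1] else f k) : Fi gT k).

Lemma retarget_out (f : F) i x k : ~~ A i k -> retarget f i x k = f k.
Proof. by rewrite ffunE => /negbTE ->. Qed.

Lemma p_retarget (f : F) i x : p i (retarget f i x) = restr (A i) x.
Proof. by apply/ffunP => -[k Aik]; rewrite !ffunE /= eE ffunE Aik ffunE invgK. Qed.

Variable S : forall i, {set gT i}.
Hypothesis S_gen : forall i, <<S i>> = [set: gT i].

Inductive reach (f : F) : F -> Prop :=
| reach_refl : reach f f
| reach_step h i (s : gT i) : reach f h -> s \in S i -> reach f (wmul h (fbar s)).

Lemma reach_trans f g h : reach f g -> reach g h -> reach f h.
Proof. by move=> fg; elim=> // {}h i s _ IH Ss; apply: reach_step IH Ss. Qed.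

Lemma reach_upd_p_word (f : F) i (l : seq (gT i)) : all [in S i] l ->
  reach f (upd_point f i (p i f) (f i (p i f) * \prod_(s <- l) s)).
Proof.
elim: l f => [|s l IH] f /=; first by rewrite big_nil mulg1 upd_point_id; constructor.
case/andP => Ss Sl; apply: reach_trans (reach_step (reach_refl f) Ss) _.
have := IH (upd_point f i (p i f) (f i (p i f) * s)) Sl.
by rewrite wmul_fbar p_upd_point upd_pointK upd_point_in eqxx big_cons mulgA.
Qed.

Lemma reach_upd_p (f : F) i v : reach f (upd_point f i (p i f) v).
Proof.
have : (f i (p i f))^-1 * v \in <<S i>> by rewrite S_gen inE.
case/gen_prodgP => n [c Sc prod_c].
have := @reach_upd_p_word f i [seq c k | k <- enum 'I_n].
rewrite big_map enumT -prod_c mulKVg; apply.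
by apply/allP => _ /mapP[k _ ->]; apply: Sc.
Qed.

Definition coord_reach (j : I) :=
  forall f h : F, (forall k, k != j -> f k = h k) -> reach f h.

Lemma reach_agree_off (s : seq I) : {in s, forall j, coord_reach j} ->
  forall f h : F, (forall k, k \notin s -> f k = h k) -> reach f h.
Proof.
elim: s => [|j s IH] s_reach f h fh.
  have -> : f = h by apply/ffunP => k; apply: fh.
  exact: reach_refl.
apply: (@reach_trans _ (upd_coord f (h j))).
  by apply: (s_reach j (mem_head _ _)) => k kj; rewrite upd_coord_out.
apply: IH => [k sk | k]; first by apply: s_reach; rewrite in_cons sk orbT.
have [-> _ | kj sk] := eqVneq k j; first by rewrite upd_coord_in.
by rewrite upd_coord_out // fh // in_cons negb_or kj.
Qed.

Lemma reach_upd_point i : (forall j, A i j -> coord_reach j) ->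
  forall (f : F) z v, reach f (upd_point f i z v).
Proof.
move=> above f z v; have [x <-] := restr_surj z.
have reach_off_A (g h : F) : (forall k, ~~ A i k -> g k = h k) -> reach g h.
  move=> gh; apply: (reach_agree_off (s := enum (A i))) => [j | k].
    by rewrite mem_enum; apply: above.
  by rewrite mem_enum; apply: gh.
apply: reach_trans (reach_off_A f (retarget f i x) _) _.
  by move=> k /retarget_out.
rewrite -{1}(p_retarget f i x); apply: reach_trans (reach_upd_p _ v) _.
apply: reach_off_A => k /retarget_out fk.
exact: upd_point_coord_eq.
Qed.

Lemma coord_reach_points i :
  (forall (f : F) z v, reach f (upd_point f i z v)) -> coord_reach i.
Proof.
move=> points f h fh.
suff : forall (zs : seq (prodOn gT (A i))) (g : F), (forall k, k != i -> g k = h k) ->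
    (forall z, z \notin zs -> g i z = h i z) -> reach g h.
  by move=> /(_ (enum (prodOn gT (A i))) f fh); apply=> z; rewrite mem_enum.
elim=> [|z zs IH] g gh gz.
  have -> : g = h; last by constructor.
  apply/ffunP => k; have [-> | /gh //] := eqVneq k i.
  by apply/ffunP => z; apply: gz.
apply: reach_trans (points g z (h i z)) _; apply: IH => [k ki | w].
  by rewrite upd_point_out ?gh.
move=> zs_w; rewrite upd_point_in; case: eqVneq => [-> // | wz].
by apply: gz; rewrite in_cons negb_or wz.
Qed.

Lemma coord_reachT i : coord_reach i.
Proof. by elim/(@A_ind _ I): i => i IH; apply/coord_reach_points/reach_upd_point. Qed.

Lemma reach_wone (f : F) : reach (wone gT) f.
Proof.
by apply: (reach_agree_off (s := enum I)) => [j _ | k]; [apply: coord_reachT | rewrite mem_enum].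
Qed.

End WreathProduct.

(* Symmetry of S_i and 1 \notin S_i only make the graphs simple. *)
Theorem theorem3p14 (disp : Order.disp_t) (I : finPOrderType disp)
  (gT : I -> finGroupType) (S : forall i, {set gT i})
  (HSgen : forall i, <<S i>> = [set: gT i])
  (HSsym : forall i (x : gT i), x \in S i -> x^-1 \in S i)
  (HS1 : forall i, (1 : gT i) \notin S i) :
  generates (inS S) /\
  (forall f h : F gT, wg_adj S f h <-> cayF_adj (inS S) f h).
Proof.
split.
  move=> H [H1 Hmul _] HS f.
  elim: (reach_wone HSgen f) => // h i s _ IH Ss.
  by apply: Hmul => //; apply: HS; exists i, s.
move=> f h; split.
  case=> i [off_i off_p [t St ft]]; exists (fbar t); first by exists i, t.
  by rewrite wmul_fbar; apply/upd_pointP.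
case=> _ [i [t St ->]] ->; have /upd_pointP[off_i off_p ft] := wmul_fbar f t.
by exists i; split=> //; exists t.
Qed.
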